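(* Let $f\in\mathrm{Dom}_+(\Gamma)$ be a strictly positive bounded function and $b=\sup_{x\in\mathbb X}f(x)$. Assume there exists an increasing (not necessarily strictly) function $g:(0,\infty)\to(0,\infty)$ with $\int_0^b\frac{dy}{g(y)}<\infty$. If $\Gamma f(x)\le-g(f(x))$ for all $x\in\mathbb X$, then $\mathbb E_x\zeta<\infty$ for all $x\in\mathbb X$.
   Context: Let $\mathbb X$ be a countably infinite set and $\Gamma=(\Gamma_{xy})_{x,y\in\mathbb X}$ a matrix with $\Gamma_{xy}\ge0$ for $y\ne x$, $\gamma_x:=\sum_{y\ne x}\Gamma_{xy}$, $\Gamma_{xx}=-\gamma_x$, and $0<\gamma_x<\infty$ for all $x$. Let $P_{xy}=\Gamma_{xy}/\gamma_x$ for $y\neq x$ and $P_{xx}=0$; the discrete-time chain $(\tilde\xi_n)$ with transition matrix $P$ (embedded jump chain) is assumed irreducible. The continuous-time Markov chain $(\xi_t)_{t\ge0}$ with generator $\Gamma$: conditionally on $\tilde\xi$, holding times $\sigma_n$ ($n\ge1$) are independent exponential with parameter $\gamma_{\tilde\xi_{n-1}}$; $J_0=0$, $J_n=\sigma_1+\dots+\sigma_n$; explosion time $\zeta=\lim_n J_n$; $\xi_t=\tilde\xi_n$ on $[J_n,J_{n+1})$ and $\xi_t=\partial$ (cemetery) for $t\ge\zeta$. $\mathbb E_x$ refers to $\xi_0=x$. $\mathrm{Dom}(\Gamma)=\{f:\mathbb X\to\mathbb R:\ \sum_{y\ne x}\Gamma_{xy}|f(y)|<\infty\ \forall x\}$,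 $\mathrm{Dom}_+(\Gamma)$ its non-negative elements, $\Gamma f(x)=\sum_{y}\Gamma_{xy}f(y)$. *)

From HB Require Import structures.
From mathcomp Require Import all_boot all_order all_algebra.
From mathcomp Require Import all_classical all_reals all_analysis.
Set Implicit Arguments. Unset Strict Implicit. Unset Printing Implicit Defensive.
Import Order.TTheory GRing.Theory Num.Theory.
Import numFieldNormedType.Exports.
Local Open Scope classical_set_scope.
Local Open Scope ring_scope.

Section MarkovDefs.
Context {R : realType} {X : countType}.
Variable Gam : X -> X -> R.

Definition gammaE (x : X) : \bar R := (\esum_(y in ~` [set x]) (Gam x y)%:E)%E.
Definition gammaR (x : X) : R := fine (gammaE x).

Definition Qmatrix : Prop :=
  (forall x y, x != y -> 0 <= Gam x y) /\
  (forall x, (0 < gammaE x)%E /\ (gammaE x < +oo)%E) /\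
  (forall x, Gam x x = - gammaR x).

Definition Pjump (x y : X) : R := if y == x then 0 else Gam x y / gammaR x.

(* irreducibility of the jump chain: every y reachable from every x by a
   path with positive transition probabilities (n = 0 steps allowed) *)
Definition jump_irreducible : Prop :=
  forall x y : X, exists s : seq X,
    path (fun a b => 0 < Pjump a b) x s && (last x s == y).

Definition in_Dom (f : X -> R) : Prop :=
  forall x, (\esum_(y in ~` [set x]) (Gam x y * `|f y|)%:E < +oo)%E.

Definition in_Dom_plus (f : X -> R) : Prop := in_Dom f /\ forall x, 0 <= f x.

(* Gamma f (x) = sum_y Gamma_xy f(y); used for f in Dom_+(Gamma), where the
   off-diagonal terms are nonnegative and summable *)
Definition Gen (f : X -> R) (x : X) : R :=
  Gam x x * f x + fine (\esum_(y in ~` [set x]) (Gam x y * f y)%:E)%E.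

(* (xi, sigma) on a probability space realize the CTMC with generator Gam
   started at x0: xi n is the embedded jump chain, sigma n (n >= 1) the
   holding times; finite-dimensional distributions:
   P(xi_0 = x_0,..,xi_n = x_n, sigma_1 > t_1,..,sigma_n > t_n)
     = 1_{x_0 = x0} prod_{k<n} P_{x_k x_{k+1}} exp(-gamma_{x_k} t_{k+1}). *)
Definition is_CTMC {d : measure_display} {T : measurableType d}
  (P : probability T R) (x0 : X) (xi : nat -> T -> X) (sigma : nat -> T -> R)
  : Prop :=
  (forall n (y : X), measurable [set w | xi n w = y]) /\
  (forall n, measurable_fun setT (sigma n)) /\
  (forall n w, 0 <= sigma n w) /\
  (forall (n : nat) (xs : nat -> X) (ts : nat -> R),
     (forall k, 0 <= ts k) ->
     P [set w | (forall k, (k <= n)%N -> xi k w = xs k) /\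
                (forall k, (k < n)%N -> ts k.+1 < sigma k.+1 w)]
     = (((xs 0%N == x0)%:R) *
        \prod_(k < n) (Pjump (xs k) (xs k.+1) *
                       expR (- (gammaR (xs k) * ts k.+1))))%:E).

Definition zeta {T : Type} (sigma : nat -> T -> R) (w : T) : \bar R :=
  (\sum_(1 <= n <oo) (sigma n w)%:E)%E.

End MarkovDefs.

From HB Require Import structures.
From mathcomp Require Import all_boot all_order all_algebra.
From mathcomp Require Import all_classical all_reals all_analysis.
From mathcomp Require Import measurable_realfun ring lra.
Import Order.TTheory GRing.Theory Num.Theory.
Import numFieldNormedType.Exports.
Local Open Scope classical_set_scope.
Local Open Scope ring_scope.

(* Let F t = \int_0^t dy / g y and V = F o f, a nonnegative function bounded by
   F (sup f) < +oo.  As 1/g is nonincreasing, F t - F s <= (t - s) / g s, so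
   the drift condition Gen f <= - g o f becomes P V + 1/gamma <= V for the
   jump chain P.  Summing this along the laws of the jump chain gives
   \sum_n E[1/gamma(xi_n)] <= V x.  Given xi_n = y the holding time
   sigma_(n+1) is exponential with rate gamma_y; comparing it with a step
   function of step 1/gamma_y gives
   E sigma_(n+1) <= E[1/gamma(xi_n)] / (1 - e^-1), hence
   E zeta = \sum_n E sigma_(n+1) < +oo. *)

Section CountableSum.
Local Open Scope ereal_scope.
Context {R : realType} {X : countType}.

(* Sums over the countable type X are series along the enumeration
   [pickle_inv], so that the nneseries lemmas (linearity, interchange) apply;
   [csum_esum] identifies them with unordered sums. *)
Definition csum_term (a : X -> \bar R) (i : nat) : \bar R :=
  if @pickle_inv X i is Some y then a y else 0.

Definition csum (a : X -> \bar R) : \bar R := \sum_(i <oo) csum_term a i.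

Lemma csum_term_ge0 a : (forall y, 0 <= a y) -> forall i, 0 <= csum_term a i.
Proof. by move=> a0 i; rewrite /csum_term; case: pickle_inv. Qed.

Lemma csum_esum a : (forall y, 0 <= a y) -> csum a = \esum_(y in [set: X]) a y.
Proof.
move=> a0; rewrite /csum nneseries_esumT; last exact: csum_term_ge0.
rewrite (esumID (range (@pickle X))); last by move=> i _; exact: csum_term_ge0.
rewrite [X in _ + X]esum1 ?adde0; last first.
  move=> i [_ /= iNpickle]; rewrite /csum_term; case E: pickle_inv => [y|//].
  by exfalso; apply: iNpickle; exists y => //; rewrite -(@pickle_invK X i) E.
rewrite setTI (reindex_esum [set: X] _ (@pickle X)); last first.
  split; first by move=> y _; exists y.
    by move=> y z _ _; apply: (pcan_inj (@pickleK X)).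
  by move=> i [y _ <-]; exists y.
by apply: eq_esum => y _; rewrite /csum_term pickleK_inv.
Qed.

Lemma csum_ge0 a : (forall y, 0 <= a y) -> 0 <= csum a.
Proof. by move=> a0; apply: nneseries_ge0 => n _ _; exact: csum_term_ge0. Qed.

Lemma le_csum a b : (forall y, 0 <= a y) -> (forall y, a y <= b y) ->
  csum a <= csum b.
Proof.
move=> a0 ab; apply: lee_nneseries => [i _ _|i _]; first exact: csum_term_ge0.
by rewrite /csum_term; case: pickle_inv.
Qed.

Lemma csumD a b : (forall y, 0 <= a y) -> (forall y, 0 <= b y) ->
  csum (fun y => a y + b y) = csum a + csum b.
Proof.
move=> a0 b0; rewrite /csum -nneseriesD => [|i _ _|i _ _]; last 2 first.
- exact: csum_term_ge0.
- exact: csum_term_ge0.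
by apply: eq_eseriesr => i _; rewrite /csum_term; case: pickle_inv; rewrite ?adde0.
Qed.

Lemma csumZl a (c : R) : (forall y, 0 <= a y) ->
  csum (fun y => c%:E * a y) = c%:E * csum a.
Proof.
move=> a0; rewrite /csum -nneseriesZl; last by move=> i _; exact: csum_term_ge0.
by apply: eq_eseriesr => i _; rewrite /csum_term; case: pickle_inv; rewrite ?mule0.
Qed.

Lemma csumZr a (c : R) : (forall y, 0 <= a y) ->
  csum (fun y => a y * c%:E) = csum a * c%:E.
Proof. by move=> a0; rewrite muleC -csumZl//; under eq_fun do rewrite muleC. Qed.

Lemma csumZl_fin a (c : \bar R) : c \is a fin_num -> (forall y, 0 <= a y) ->
  csum (fun y => c * a y) = c * csum a.
Proof. by move=> c_fin a0; rewrite -(fineK c_fin) csumZl. Qed.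

Lemma csum_interchange (a : X -> X -> \bar R) : (forall y z, 0 <= a y z) ->
  csum (fun y => csum (a y)) = csum (fun z => csum (a^~ z)).
Proof.
move=> a0.
have -> : csum (fun y => csum (a y)) =
    \sum_(i <oo) \sum_(j <oo) csum_term (fun y => csum_term (a y) j) i.
  apply: eq_eseriesr => i _; rewrite /csum_term; case: pickle_inv => [//|].
  by rewrite eseries0.
rewrite nneseries_interchange => [|i j]; last first.
  by apply: csum_term_ge0 => y; exact: csum_term_ge0.
apply: eq_eseriesr => j _; rewrite /csum /csum_term; case: pickle_inv => [z|].
  by apply: eq_eseriesr => i _; case: pickle_inv.
by rewrite eseries0// => i _ _; case: pickle_inv.
Qed.

Lemma csum_single a (x : X) : (forall y, 0 <= a y) ->
  (forall y, y != x -> a y = 0) -> csum a = a x.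
Proof.
move=> a0 ax; rewrite csum_esum// (esumID [set x]) //.
rewrite [X in _ + X]esum1 ?adde0; last by move=> y [_ /= /eqP] /ax.
by rewrite setTI esum_set1.
Qed.

Lemma esum_setC1 (a : X -> \bar R) (x : X) : (forall y, y != x -> 0 <= a y) ->
  \esum_(y in ~` [set x]) a y = csum (fun y => if y == x then 0 else a y).
Proof.
move=> a0; have a0' y : 0 <= (if y == x then 0 else a y).
  by case: ifPn => // /a0.
rewrite csum_esum// (esumID [set x] [set: X]) //.
rewrite [X in X + _]esum1 ?add0e; last by move=> y [_ /= ->]; rewrite eqxx.
by rewrite setTI; apply: eq_esum => y /= /eqP/negPf ->.
Qed.

End CountableSum.

Section CountableUnion.
Local Open Scope ereal_scope.
Context {R : realType} {X : countType} {d : measure_display} {T : measurableType d}.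
Variable mu : {measure set T -> \bar R}.
Variable F : X -> set T.
Hypothesis F_measurable : forall a, measurable (F a).
Hypothesis F_disj : forall a b w, F a w -> F b w -> a = b.

Let pickle_set (i : nat) : set T :=
  if @pickle_inv X i is Some a then F a else set0.

Let pickle_set_measurable i : measurable (pickle_set i).
Proof. by rewrite /pickle_set; case: pickle_inv. Qed.

Let trivIset_pickle_set : trivIset setT pickle_set.
Proof.
move=> i j _ _ [w []]; rewrite /pickle_set.
case Ei: pickle_inv => [a|//]; case Ej: pickle_inv => [b|//] Fa Fb.
have ab := F_disj _ _ _ Fa Fb; subst b.
by rewrite -(@pickle_invK X i) -(@pickle_invK X j) Ei Ej.
Qed.

Let bigcup_pickle_set : \bigcup_i pickle_set i = \bigcup_(a in setT) F a.
Proof.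
apply/seteqP; split => w.
  by move=> [i _]; rewrite /pickle_set; case: pickle_inv => // a Fa; exists a.
by move=> [a _ Fa]; exists (pickle a) => //; rewrite /pickle_set pickleK_inv.
Qed.

Lemma measure_bigcup_csum :
  mu (\bigcup_(a in setT) F a) = csum (fun a => mu (F a)).
Proof.
rewrite -bigcup_pickle_set measure_bigcup //.
under eq_eseriesl do rewrite in_setT.
by apply: eq_eseriesr => i _; rewrite /pickle_set /csum_term; case: pickle_inv.
Qed.

Lemma ge0_integral_bigcup_csum (h : T -> \bar R) :
  measurable_fun (\bigcup_(a in setT) F a) h -> (forall w, 0 <= h w) ->
  \int[mu]_(w in \bigcup_(a in setT) F a) h w =
  csum (fun a => \int[mu]_(w in F a) h w).
Proof.
rewrite -bigcup_pickle_set => mh h0; rewrite ge0_integral_bigcup //.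
apply: eq_eseriesr => i _; rewrite /pickle_set /csum_term.
by case: pickle_inv => // ; rewrite integral_set0.
Qed.

End CountableUnion.

Section JumpChain.
Local Open Scope ereal_scope.
Context {R : realType} {X : countType} {Gam : X -> X -> R}.
Hypothesis HQ : Qmatrix Gam.

Lemma gammaEE y : gammaE Gam y = (gammaR Gam y)%:E.
Proof.
case: HQ => _ [/(_ y) [g0 goo] _]; rewrite /gammaR fineK //.
by rewrite ge0_fin_numE// ltW.
Qed.

Lemma gammaR_gt0 y : (0 < gammaR Gam y)%R.
Proof. by case: HQ => _ [/(_ y) [g0 _] _]; rewrite -lte_fin -gammaEE. Qed.

Lemma Pjump_ge0 y z : (0 <= Pjump Gam y z)%R.
Proof.
rewrite /Pjump; case: eqP => // /eqP zy; case: HQ => Gam_ge0 _.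
by rewrite divr_ge0 ?Gam_ge0 1?eq_sym// ltW// gammaR_gt0.
Qed.

Lemma csum_Pjump_esum (u : X -> R) y :
  (forall z, z != y -> (0 <= Gam y z * u z)%R) ->
  csum (fun z => (Pjump Gam y z * u z)%:E) =
  (gammaR Gam y)^-1%:E * \esum_(z in ~` [set y]) (Gam y z * u z)%:E.
Proof.
move=> Gu0; rewrite esum_setC1 => [|z /Gu0]; last by rewrite lee_fin.
rewrite -csumZl => [|z]; last by case: ifPn => // /Gu0; rewrite lee_fin.
apply: eq_eseriesr => i _; rewrite /csum_term; case: pickle_inv => // z.
rewrite /Pjump; case: eqP => _; first by rewrite mul0r mule0.
by rewrite -EFinM mulrAC mulrC.
Qed.

Lemma csum_Pjump y : csum (fun z => (Pjump Gam y z)%:E) = 1.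
Proof.
under eq_fun do rewrite -[Pjump _ _ _]mulr1.
rewrite csum_Pjump_esum => [|z zy]; last first.
  by case: HQ => Gam_ge0 _; rewrite mulr1 Gam_ge0 1?eq_sym.
under eq_esum do rewrite mulr1.
by rewrite -/(gammaE Gam y) gammaEE -EFinM mulVf// gt_eqF// gammaR_gt0.
Qed.

Lemma csum_Pjump_const y (c : R) : (0 <= c)%R ->
  csum (fun z => (Pjump Gam y z * c)%:E) = c%:E.
Proof.
move=> c0; under eq_fun do rewrite EFinM.
by rewrite csumZr ?csum_Pjump ?mul1e// => z; rewrite lee_fin Pjump_ge0.
Qed.

Lemma csum_Pjump_Gen (f : X -> R) y : in_Dom_plus Gam f ->
  csum (fun z => (Pjump Gam y z * f z)%:E) =
  (f y + Gen Gam f y / gammaR Gam y)%:E.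
Proof.
case=> f_Dom f0; case: HQ => Gam_ge0 [_ Gam_diag].
have Gf0 z : z != y -> (0 <= Gam y z * f z)%R.
  by move=> zy; rewrite mulr_ge0 ?Gam_ge0 1?eq_sym.
rewrite csum_Pjump_esum //.
have Gf_fin : \esum_(z in ~` [set y]) (Gam y z * f z)%:E \is a fin_num.
  rewrite ge0_fin_numE; last by apply: esum_ge0 => z /eqP zy; rewrite lee_fin Gf0.
  by under eq_esum do rewrite -[f _]ger0_norm//; exact: f_Dom.
rewrite -(fineK Gf_fin) -EFinM; congr EFin.
have g0 := gammaR_gt0 y.
rewrite /Gen Gam_diag; field; exact: lt0r_neq0.
Qed.

Lemma Pjump_drift (f V : X -> R) (G : R) y : in_Dom_plus Gam f ->
  (forall z, 0 <= V z)%R -> (0 < G)%R ->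
  (forall z, V z - V y <= (f z - f y) / G)%R -> (Gen Gam f y <= - G)%R ->
  csum (fun z => (Pjump Gam y z * V z)%:E) + (gammaR Gam y)^-1%:E <= (V y)%:E.
Proof.
move=> f_Domp V0 G0 V_le drift; have [_ f0] := f_Domp.
have P0 := Pjump_ge0 y.
set c := (f y / G)%R; have c0 : (0 <= c)%R by rewrite divr_ge0// ltW.
(* adding [c] to both sides keeps every summand nonnegative *)
have PV_le : csum (fun z => (Pjump Gam y z * V z)%:E + (Pjump Gam y z * c)%:E) <=
    csum (fun z => (Pjump Gam y z * V y)%:E + (Pjump Gam y z * f z)%:E * G^-1%:E).
  apply: le_csum => z; first by rewrite adde_ge0// lee_fin mulr_ge0.
  have : (V z + c <= V y + f z / G)%R.
    by move: (V_le z); rewrite /c mulrBl; lra.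
  move/(ler_wpM2l (P0 z)).
  by rewrite -!EFinM -!EFinD lee_fin -mulrA -!mulrDr.
rewrite !csumD ?csum_Pjump_const// in PV_le;
  try by move=> z; rewrite -?EFinM lee_fin !mulr_ge0// ?invr_ge0 ltW.
rewrite csumZr in PV_le; last by move=> z; rewrite lee_fin mulr_ge0.
rewrite (csum_Pjump_Gen f y f_Domp) in PV_le.
have PV0 : 0 <= csum (fun z => (Pjump Gam y z * V z)%:E).
  by apply: csum_ge0 => z; rewrite lee_fin mulr_ge0.
move: PV_le PV0.
case: (csum _) => [S||] //=; rewrite -!EFinM -!EFinD !lee_fin => PV_le S0.
have g0 := gammaR_gt0 y.
have : (Gen Gam f y / gammaR Gam y / G <= - (gammaR Gam y)^-1)%R.
  have -> : (- (gammaR Gam y)^-1 = - G / gammaR Gam y / G)%R.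
    by field; rewrite !gt_eqF.
  by rewrite !ler_pM2r ?invr_gt0.
move: PV_le; rewrite /c mulrDl; lra.
Qed.

End JumpChain.

Section GeometricTail.
Local Open Scope ereal_scope.
Context {R : realType}.

Lemma le_step_series (s dl : R) : (0 < dl)%R -> (0 <= s)%R ->
  s%:E <= \sum_(j <oo) (if (j%:R * dl < s)%R then dl else 0%R)%:E.
Proof.
move=> dl0 s0.
have [N sN N_min] : exists2 N : nat, (s <= N%:R * dl)%R &
    forall i, (s <= i%:R * dl)%R -> (N <= i)%N.
  have ex : exists n : nat, (s <= n%:R * dl)%R.
    exists (Num.Def.archi_bound (s / dl)).
    by rewrite -ler_pdivrMr// ltW// archi_boundP// divr_ge0// ltW.
  by case: (ex_minnP ex) => N; exists N.
apply: (le_trans _ (nneseries_lim_ge N _)); last first.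
  by move=> n _ _; case: ifP => _; rewrite lee_fin// ltW.
rewrite big_nat_cond (eq_bigr (fun=> dl%:E)) -?big_nat_cond; last first.
  move=> i /andP[/andP[_ iN] _]; case: ltP => // /N_min.
  by rewrite leqNgt iN.
by rewrite sumEFin sumr_const_nat subn0 lee_fin -mulr_natr mulrC.
Qed.

Lemma nneseries_geometric_le (q : R) : (0 < q)%R -> (q < 1)%R ->
  \sum_(j <oo) (q ^+ j)%:E <= ((1 - q)^-1)%:E.
Proof.
move=> q0 q1; apply: lime_le.
  by apply: is_cvg_nneseries => n _ _; rewrite lee_fin exprn_ge0// ltW.
apply: nearW => n; rewrite /= sumEFin lee_fin.
have := @geometric_le_lim R n 1 q ler01 q0; rewrite gtr0_norm// mul1r => /(_ q1).
apply: le_trans; rewrite le_eqVlt; apply/orP; left; apply/eqP.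
by rewrite /series /=; apply: eq_bigr => k _; rewrite /geometric /= mul1r.
Qed.

Context {d : measure_display} {T : measurableType d}.
Variable mu : {measure set T -> \bar R}.

Lemma integral_le_geometric_tail (A : set T) (s : T -> R) (dl m q : R) :
  measurable A -> measurable_fun setT s -> (forall w, 0 <= s w)%R ->
  (0 < dl)%R -> (0 < q)%R -> (q < 1)%R ->
  (forall j, mu (A `&` [set w | (j%:R * dl < s w)%R]) <= (m * q ^+ j)%:E) ->
  \int[mu]_(w in A) (s w)%:E <= (dl * m / (1 - q))%:E.
Proof.
move=> mA ms s0 dl0 q0 q1 tail.
have m0 : (0 <= m)%R.
  by rewrite -lee_fin -[m]mulr1 -(expr0 q) (le_trans _ (tail 0%N)).
pose L j := [set w | (j%:R * dl < s w)%R].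
have mL j : measurable (L j).
  have := ms measurableT `](j%:R * dl)%R, +oo[%classic (measurable_itv _).
  by rewrite setTI /L; under eq_set do rewrite in_itv/= andbT.
have step0 j w : 0 <= (dl * \1_(L j) w)%:E.
  by rewrite lee_fin mulr_ge0// ?ltW// indicE.
have mstep j : measurable_fun A (fun w => (dl * \1_(L j) w)%:E).
  by apply/measurable_EFinP; apply: measurable_funM => //; exact: measurable_indic.
apply: (@le_trans _ _ (\int[mu]_(w in A) \sum_(j <oo) (dl * \1_(L j) w)%:E)).
  apply: ge0_le_integral => //.
  - by move=> w _; rewrite lee_fin.
  - by apply/measurable_EFinP; exact: measurable_funS ms.
  - by apply: ge0_emeasurable_sum => // j w _ _; exact: step0.
  move=> w _; apply: (le_trans (le_step_series _ _ dl0 (s0 w))).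
  apply: lee_nneseries => [j _ _|j _]; first by case: ifP; rewrite lee_fin// ltW.
  rewrite indicE; case: ifPn => [sw|_]; last by rewrite lee_fin mulr_ge0// ltW.
  by rewrite mem_set// mulr1.
rewrite integral_nneseries//.
apply: (@le_trans _ _ (\sum_(j <oo) ((dl * m)%:E * (q ^+ j)%:E))).
  apply: lee_nneseries => [j _ _|j _]; first by apply: integral_ge0 => w _.
  rewrite (@integralZl_indic _ _ _ mu _ mA (fun=> L j)) //; last first.
    by rewrite ltNge ltW.
  rewrite integral_indic// setIC -EFinM -mulrA EFinM lee_pmul2l ?lte_fin//.
  exact: tail.
rewrite nneseriesZl => [|j _]; last by rewrite lee_fin exprn_ge0// ltW.
apply: le_trans (lee_wpmul2l _ (nneseries_geometric_le _ q0 q1)) _.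
  by rewrite lee_fin mulr_ge0// ltW.
by rewrite -EFinM.
Qed.

End GeometricTail.

Section RecipIntegral.
Context {R : realType} (g : R -> R).
Hypothesis g_gt0 : forall y : R, 0 < y -> 0 < g y.
Hypothesis g_nondecr : {in `]0, +oo[ &, {homo g : y z / y <= z}}.

Local Notation posR := (`]0%R, +oo[%classic : set R).

Let g_le s y : 0 < s -> s <= y -> g s <= g y.
Proof.
move=> s0 sy; apply: g_nondecr => //; rewrite in_itv /= andbT //.
exact: lt_le_trans sy.
Qed.

Let recip_g_ge0 y : 0 < y -> 0 <= (g y)^-1.
Proof. by move=> y0; rewrite invr_ge0 ltW// g_gt0. Qed.

Lemma measurable_recip_g (A : set R) : measurable A -> A `<=` posR ->
  measurable_fun A (fun y => ((g y)^-1)%:E).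
Proof.
move=> mA Apos; apply/measurable_EFinP.
apply: measurable_funS Apos _; first exact: measurable_itv.
apply: (measurability (@RGenCInfty.G R)) => [|/= _ [_] [r] -> <-].
  exact: RGenCInfty.measurableE.
apply: is_interval_measurable => s t [/= s0 Hs] [/= t0 Ht] u /andP[su ut].
move: s0 t0 Hs Ht; rewrite !in_itv /= !andbT => s0 t0 Hs Ht.
have u0 := lt_le_trans s0 su; split => //=.
by rewrite (le_trans Ht)// lef_pV2 ?posrE ?g_gt0// g_le.
Qed.

Local Open Scope ereal_scope.

Definition int_recip (t : R) : \bar R :=
  \int[lebesgue_measure]_(y in `]0%R, t[%classic) ((g y)^-1)%:E.

Lemma int_recip_ge0 t : 0 <= int_recip t.
Proof.
apply: integral_ge0 => y /=; rewrite in_itv /= => /andP[y0 _].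
by rewrite lee_fin recip_g_ge0.
Qed.

Lemma int_recip_split {s t : R} : (0 < s)%R -> (s <= t)%R ->
  int_recip t =
  int_recip s + \int[lebesgue_measure]_(y in `[s, t[%classic) ((g y)^-1)%:E.
Proof.
move=> s0 st.
have split0 : `]0%R, t[%classic = `]0%R, s[%classic `|` `[s, t[%classic.
  by apply: itv_bndbnd_setU; rewrite /= bnd_simp.
rewrite /int_recip split0 ge0_integral_setU //.
- rewrite -split0; apply: measurable_recip_g => // y /=.
  by rewrite !in_itv /= andbT => /andP[].
- move=> y; rewrite -split0 /= in_itv /= => /andP[y0 _].
  by rewrite lee_fin recip_g_ge0.
- apply/disj_setPS => y [] /=; rewrite !in_itv /= => /andP[_ ys] /andP[sy _].
  by move: (lt_le_trans ys sy); rewrite ltxx.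
Qed.

Let integral_itv_cst (s t r : R) : (s <= t)%R ->
  \int[lebesgue_measure]_(y in `[s, t[%classic) r%:E = (r * (t - s))%:E.
Proof.
move=> st; rewrite integral_cst /= ?lebesgue_measure_itv /= ?lte_fin//.
case: ltP => [_|ts]; first by rewrite -EFinD -EFinM.
have -> : t = s by apply/eqP; rewrite eq_le st ts.
by rewrite subrr mulr0 mule0.
Qed.

Let itv_pos (s t : R) : (0 < s)%R -> `[s, t[%classic `<=` posR.
Proof. by move=> s0 y /=; rewrite !in_itv /= andbT => /andP[/(lt_le_trans s0)]. Qed.

Let integral_recip_le (s t : R) : (0 < s)%R -> (s <= t)%R ->
  \int[lebesgue_measure]_(y in `[s, t[%classic) ((g y)^-1)%:E
    <= ((g s)^-1 * (t - s))%:E.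
Proof.
move=> s0 st; rewrite -integral_itv_cst//; apply: ge0_le_integral => //.
- move=> y /= /[!in_itv] /= /andP[sy _].
  by rewrite lee_fin recip_g_ge0// (lt_le_trans s0 sy).
- exact: measurable_recip_g (@itv_pos s t s0).
- move=> y /= /[!in_itv] /= /andP[sy _]; have y0 := lt_le_trans s0 sy.
  by rewrite lee_fin lef_pV2 ?posrE ?g_gt0// g_le.
Qed.

Let integral_recip_ge (s t : R) : (0 < s)%R -> (s <= t)%R ->
  ((g t)^-1 * (t - s))%:E
    <= \int[lebesgue_measure]_(y in `[s, t[%classic) ((g y)^-1)%:E.
Proof.
move=> s0 st; rewrite -integral_itv_cst//; apply: ge0_le_integral => //.
- by move=> y _; rewrite lee_fin recip_g_ge0// (lt_le_trans s0 st).
- exact: measurable_recip_g (@itv_pos s t s0).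
- move=> y /= /[!in_itv] /= /andP[sy yt]; have y0 := lt_le_trans s0 sy.
  by rewrite lee_fin lef_pV2 ?posrE ?g_gt0 ?(lt_le_trans s0 st)// g_le// ltW.
Qed.

Variable b : R.
Hypothesis int_recip_b : int_recip b < +oo.

Lemma int_recip_fin {t} : (0 < t)%R -> (t <= b)%R -> int_recip t \is a fin_num.
Proof.
move=> t0 tb; rewrite ge0_fin_numE ?int_recip_ge0// (le_lt_trans _ int_recip_b)//.
rewrite (int_recip_split t0 tb) leeDl// integral_ge0// => y /=.
by rewrite in_itv /= => /andP[/(lt_le_trans t0) y0 _]; rewrite lee_fin recip_g_ge0.
Qed.

(* the primitive of the nonincreasing function 1/g is concave *)
Lemma int_recip_sub_le {s t : R} :
  (0 < s)%R -> (0 < t)%R -> (s <= b)%R -> (t <= b)%R ->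
  (fine (int_recip t) - fine (int_recip s) <= (t - s) / g s)%R.
Proof.
move=> s0 t0 sb tb.
have [st|ts] := leP s t.
  have := int_recip_fin t0 tb; rewrite (int_recip_split s0 st) fin_numD.
  case/andP=> s_fin I_fin; rewrite fineD// addrAC subrr add0r mulrC.
  rewrite -lee_fin fineK//.
  exact: integral_recip_le.
have := int_recip_fin s0 sb; rewrite (int_recip_split t0 (ltW ts)) fin_numD.
case/andP=> t_fin I_fin; rewrite (fineD t_fin I_fin) opprD addrA subrr add0r.
have -> : ((t - s) / g s = - ((g s)^-1 * (s - t)))%R by ring.
rewrite lerN2 -lee_fin fineK//.
exact/integral_recip_ge/ltW.
Qed.

End RecipIntegral.

Section EmbeddedChain.
Local Open Scope ereal_scope.
Context {R : realType} {X : countType} {Gam : X -> X -> R}.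
Hypothesis HQ : Qmatrix Gam.
Context {x0 : X} {d : measure_display} {T : measurableType d}
  {P : probability T R} {xi : nat -> T -> X} {sigma : nat -> T -> R}.
Hypothesis HC : is_CTMC Gam P x0 xi sigma.

Let xi_measurable k y : measurable [set w | xi k w = y].
Proof. by case: HC => xi_meas _; exact: xi_meas. Qed.

Let sigma_measurable k : measurable_fun setT (sigma k).
Proof. by case: HC => _ []. Qed.

Let sigma_ge0 k w : (0 <= sigma k w)%R.
Proof. by case: HC => _ [_ []]. Qed.

Let sigma_gt_measurable k (t : R) : measurable [set w | (t < sigma k w)%R].
Proof.
have := sigma_measurable k measurableT `]t, +oo[%classic (measurable_itv _).
by rewrite setTI; under eq_set do rewrite in_itv /= andbT.
Qed.

Fixpoint jump_law (k : nat) : X -> \bar R :=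
  if k is k'.+1 then fun z => csum (fun a => jump_law k' a * (Pjump Gam a z)%:E)
  else fun y => ((y == x0)%:R)%:E.

Lemma jump_law_ge0 k y : 0 <= jump_law k y.
Proof.
elim: k y => [|k IHk] y /=; first by rewrite lee_fin.
by apply: csum_ge0 => a; rewrite mule_ge0// lee_fin Pjump_ge0.
Qed.

(* The path is prescribed from step [j] to step [n] only; earlier positions
   are free, which is what makes [P_cylinder] provable by induction on [j]. *)
Definition cylinder (j n : nat) (xs : nat -> X) (ts : nat -> R) : set T :=
  [set w | (forall k, (j <= k <= n)%N -> xi k w = xs k) /\
           (forall k, (k < n)%N -> (ts k.+1 < sigma k.+1 w)%R)].

Lemma cylinder_measurable j n xs ts : measurable (cylinder j n xs ts).
Proof.
have -> : cylinder j n xs ts =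
    (\bigcap_(k in [set k | (j <= k <= n)%N]) [set w | xi k w = xs k]) `&`
    (\bigcap_(k in [set k | (k < n)%N]) [set w | (ts k.+1 < sigma k.+1 w)%R]).
  by apply/seteqP; split=> w [xi_eq sigma_gt]; split=> k /= k_in;
    [exact: xi_eq | exact: sigma_gt | exact: xi_eq | exact: sigma_gt].
by apply: measurableI; apply: bigcap_measurableType => k _.
Qed.

Lemma measure_bigcup_cylinder j n i (xs : X -> nat -> X) (ts : nat -> R) :
  (j <= i <= n)%N -> (forall a, xs a i = a) ->
  P (\bigcup_(a in setT) cylinder j n (xs a) ts) =
  csum (fun a => P (cylinder j n (xs a) ts)).
Proof.
move=> i_in xs_i; apply: measure_bigcup_csum => [a|a b w [xi_a _] [xi_b _]].
  exact: cylinder_measurable.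
by rewrite -(xs_i a) -(xs_i b) -xi_a// -xi_b.
Qed.

Definition cylinder_weight (xs : nat -> X) (ts : nat -> R) (k : nat) : R :=
  Pjump Gam (xs k) (xs k.+1) * expR (- (gammaR Gam (xs k) * ts k.+1)).

Lemma P_cylinder j n xs ts : (j <= n)%N -> (forall k, 0 <= ts k)%R ->
  (forall k, (k < j)%N -> ts k.+1 = 0%R) ->
  P (cylinder j n xs ts) =
  jump_law j (xs j) * (\prod_(j <= k < n) cylinder_weight xs ts k)%:E.
Proof.
elim: j xs => [|j IHj] xs jn ts0 ts_j.
  by case: HC => _ [_ [_ fdd]]; rewrite -EFinM big_mkord -fdd.
pose xs_at a k := if k == j then a else xs k.
have -> : cylinder j.+1 n xs ts = \bigcup_(a in setT) cylinder j n (xs_at a) ts.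
  apply/seteqP; split=> w.
    move=> [xi_eq sigma_gt]; exists (xi j w) => //; split => // k /andP[jk kn].
    rewrite /xs_at; case: eqP => [->//|/eqP kj].
    by apply: xi_eq; rewrite kn andbT ltn_neqAle eq_sym kj.
  move=> [a _ [xi_eq sigma_gt]]; split => // k /andP[jk kn].
  by rewrite xi_eq ?(ltnW jk)// /xs_at gtn_eqF.
rewrite (@measure_bigcup_cylinder _ _ j); last 2 first.
- by rewrite leqnn ltnW.
- by move=> a; rewrite /xs_at eqxx.
set rest := (\prod_(j.+1 <= k < n) cylinder_weight xs ts k)%R.
transitivity (csum (fun a => jump_law j a * (Pjump Gam a (xs j.+1))%:E * rest%:E)).
  congr csum; apply: funext => a.
  rewrite IHj//; last 2 first.
  - exact: ltnW.
  - by move=> k kj; apply/ts_j/ltnW.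
  rewrite /xs_at eqxx -muleA -EFinM big_ltn// /cylinder_weight eqxx gtn_eqF//.
  rewrite ts_j// mulr0 oppr0 expR0 mulr1; congr (_ * (_ * _)%:E).
  by apply: eq_big_nat => k /andP[jk _]; rewrite /cylinder_weight !gtn_eqF// ltnW.
by rewrite csumZr// => a; rewrite mule_ge0 ?jump_law_ge0// lee_fin Pjump_ge0.
Qed.

(* [xi k = y], up to the null event that an earlier holding time vanishes *)
Definition visit (k : nat) (y : X) : set T := cylinder k k (fun=> y) (fun=> 0%R).

Lemma P_visit k y : P (visit k y) = jump_law k y.
Proof. by rewrite /visit P_cylinder// big_geq// mule1. Qed.

Lemma jump_law_fin k y : jump_law k y \is a fin_num.
Proof. by rewrite -P_visit fin_num_measure//; exact: cylinder_measurable. Qed.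

Lemma csum_jump_law k : csum (jump_law k) = 1.
Proof.
elim: k => [|k IHk] /=.
  by rewrite (csum_single _ x0) ?eqxx// => y /negPf ->.
rewrite csum_interchange => [|a z]; last first.
  by rewrite mule_ge0 ?jump_law_ge0// lee_fin Pjump_ge0.
rewrite -[RHS]IHk; congr csum; apply: funext => a.
rewrite csumZl_fin ?jump_law_fin ?csum_Pjump ?mule1// => z.
by rewrite lee_fin Pjump_ge0.
Qed.

Lemma P_visit_sigma_gt k y (t : R) : (0 <= t)%R ->
  P (visit k y `&` [set w | (t < sigma k.+1 w)%R]) =
  jump_law k y * (expR (- (gammaR Gam y * t)))%:E.
Proof.
move=> t0; pose xs z i := if i == k.+1 then z else y.
pose ts i := if i == k.+1 then t else 0%R.
have -> : visit k y `&` [set w | (t < sigma k.+1 w)%R] =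
    \bigcup_(z in setT) cylinder k k.+1 (xs z) ts.
  apply/seteqP; split=> w.
    move=> [[xi_eq sigma_gt] /= sigma_t]; exists (xi k.+1 w) => //; split.
      move=> i /andP[ki ik]; rewrite /xs; case: eqP => [->//|/eqP ik1].
      by apply: xi_eq; rewrite ki -ltnS ltn_neqAle ik1.
    move=> i; rewrite ltnS leq_eqVlt => /orP[/eqP ->|ik]; first by rewrite /ts eqxx.
    by rewrite /ts eqSS (ltn_eqF ik); exact: sigma_gt.
  move=> [z _ [xi_eq sigma_gt]]; split.
    2: by have := sigma_gt k; rewrite /ts eqxx; apply.
  split=> [i /andP[ki ik]|i ik].
    have ik1 : (i < k.+1)%N by rewrite ltnS.
    by rewrite xi_eq ?ki ?(ltnW ik1)// /xs ltn_eqF.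
  by have := sigma_gt i (ltn_trans ik (ltnSn k)); rewrite /ts eqSS (ltn_eqF ik).
rewrite (@measure_bigcup_cylinder _ _ k.+1); last 2 first.
- by rewrite leqnn leqnSn.
- by move=> z; rewrite /xs eqxx.
transitivity (csum (fun z =>
    (Pjump Gam y z)%:E * (jump_law k y * (expR (- (gammaR Gam y * t)))%:E))).
  have ts0 i : (0 <= ts i)%R by rewrite /ts; case: eqP.
  have ts_k i : (i < k)%N -> ts i.+1 = 0%R by move=> ik; rewrite /ts eqSS ltn_eqF.
  congr csum; apply: funext => z; rewrite P_cylinder//.
  rewrite big_nat1 /cylinder_weight /xs /ts eqxx (ltn_eqF (ltnSn k)).
  by rewrite EFinM muleCA.
rewrite -(fineK (jump_law_fin k y)) -EFinM csumZr ?csum_Pjump ?mul1e// => z.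
by rewrite lee_fin Pjump_ge0.
Qed.

Let visit_disj k a b w : visit k a w -> visit k b w -> a = b.
Proof.
move=> [/(_ k) + _] [/(_ k) + _]; rewrite leqnn => /(_ isT) <-.
by move=> /(_ isT).
Qed.

Let recip_gammaR_ge0 y : (0 <= (gammaR Gam y)^-1)%R.
Proof. by rewrite invr_ge0 ltW// gammaR_gt0. Qed.

Let jump_law_recip_ge0 n y : 0 <= jump_law n y * ((gammaR Gam y)^-1)%:E.
Proof. by rewrite mule_ge0 ?jump_law_ge0 ?lee_fin. Qed.

Lemma integral_visit_sigma_le k y :
  \int[P]_(w in visit k y) (sigma k.+1 w)%:E <=
  ((gammaR Gam y)^-1 * fine (jump_law k y) / (1 - expR (-1)))%:E.
Proof.
have g0 := gammaR_gt0 HQ y.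
apply: integral_le_geometric_tail => //; first exact: cylinder_measurable.
  by rewrite invr_gt0.
move=> j; rewrite [leLHS](_ : _ = jump_law k y *
    (expR (- (gammaR Gam y * (j%:R / gammaR Gam y))))%:E); last first.
  by apply: P_visit_sigma_gt; rewrite mulr_ge0.
rewrite -(fineK (jump_law_fin k y)) -EFinM lee_fin.
rewrite ler_wpM2l ?fine_ge0 ?jump_law_ge0//.
have -> : (- (gammaR Gam y * (j%:R * (gammaR Gam y)^-1)) = j%:R * -1 :> R)%R.
  by field; rewrite gt_eqF.
by rewrite expRM_natl.
Qed.

Lemma integral_sigma_le k :
  \int[P]_w (sigma k.+1 w)%:E <=
  ((1 - expR (-1))^-1)%:E * csum (fun y => jump_law k y * ((gammaR Gam y)^-1)%:E).
Proof.
pose U := \bigcup_(y in setT) visit k y.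
have visit_meas y : measurable (visit k y) by exact: cylinder_measurable.
have mU : measurable U.
  by apply: countable_bigcupT_measurable => //; exact: countableP.
have PUc : P (~` U) = 0.
  rewrite probability_setC// /U measure_bigcup_csum//; last exact: visit_disj.
  rewrite (_ : csum _ = 1) ?subee//.
  by rewrite -(csum_jump_law k); congr csum; apply: funext => a; exact: P_visit.
have msigma : measurable_fun setT (fun w => (sigma k.+1 w)%:E).
  exact/measurable_EFinP.
rewrite -(setUv U) ge0_integral_setU //; last 4 first.
- exact: measurableC.
- by rewrite setUv.
- by move=> w _; rewrite lee_fin.
- exact/disj_setPCl.
rewrite [X in _ + X]null_set_integral ?adde0//; last 2 first.
- exact: measurableC.
- exact: measurable_funS msigma.
rewrite ge0_integral_bigcup_csum//; last 3 first.
- exact: visit_disj.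
- exact: measurable_funS msigma.
- by move=> w; rewrite lee_fin.
rewrite -csumZl; last exact: jump_law_recip_ge0.
apply: le_csum => y; first by apply: integral_ge0 => w _; rewrite lee_fin.
rewrite (le_trans (integral_visit_sigma_le k y))//.
rewrite -[in X in _ <= X](fineK (jump_law_fin k y)) -!EFinM lee_fin.
by rewrite le_eqVlt; apply/orP; left; apply/eqP; ring.
Qed.

Lemma csum_jump_lawS k (h : X -> R) : (forall z, 0 <= h z)%R ->
  csum (fun z => jump_law k.+1 z * (h z)%:E) =
  csum (fun a => jump_law k a * csum (fun z => (Pjump Gam a z * h z)%:E)).
Proof.
move=> h0; have P0 a z : 0 <= (Pjump Gam a z)%:E by rewrite lee_fin Pjump_ge0.
transitivity (csum (fun z =>
    csum (fun a => jump_law k a * (Pjump Gam a z)%:E * (h z)%:E))).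
  congr csum; apply: funext => z /=; rewrite csumZr// => a.
  by rewrite mule_ge0 ?jump_law_ge0.
rewrite csum_interchange; last first.
  by move=> a z; rewrite !mule_ge0 ?jump_law_ge0 ?P0 ?lee_fin ?h0.
congr csum; apply: funext => a.
rewrite -csumZl_fin ?jump_law_fin//; last first.
  by move=> z; rewrite lee_fin mulr_ge0 ?Pjump_ge0.
by congr csum; apply: funext => z; rewrite -muleA -EFinM.
Qed.

Section Potential.
Context {V : X -> R}.
Hypothesis V_ge0 : forall y, (0 <= V y)%R.
Hypothesis V_drift : forall y,
  csum (fun z => (Pjump Gam y z * V z)%:E) + ((gammaR Gam y)^-1)%:E <= (V y)%:E.

Lemma sum_jump_law_recip_le N :
  \sum_(0 <= n < N) csum (fun y => jump_law n y * ((gammaR Gam y)^-1)%:E) +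
  csum (fun y => jump_law N y * (V y)%:E) <= (V x0)%:E.
Proof.
elim: N => [|N IHN].
  rewrite big_geq// add0e (csum_single _ x0) /= ?eqxx ?mul1e// => y.
    by rewrite mule_ge0 ?lee_fin.
  by move/negPf ->; rewrite mul0e.
apply: le_trans IHN; rewrite big_nat_recr//= -addeA leeD2l// csum_jump_lawS//.
have PV0 a : 0 <= csum (fun z => (Pjump Gam a z * V z)%:E).
  by apply: csum_ge0 => z; rewrite lee_fin mulr_ge0 ?Pjump_ge0.
rewrite -csumD => [|y|a]; last 2 first.
- exact: jump_law_recip_ge0.
- by rewrite mule_ge0 ?jump_law_ge0.
apply: le_csum => a; first by rewrite adde_ge0 ?jump_law_recip_ge0// mule_ge0 ?jump_law_ge0.
by rewrite -ge0_muleDr ?lee_fin// lee_wpmul2l ?jump_law_ge0// addeC.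
Qed.

Lemma integral_zeta_le :
  \int[P]_w zeta sigma w <= ((1 - expR (-1))^-1 * V x0)%:E.
Proof.
have c0 : (0 <= (1 - expR (-1 : R))^-1)%R.
  by rewrite invr_ge0 subr_ge0 ltW// expR_lt1 ltrN10.
have zetaE w : zeta sigma w = \sum_(n <oo) (sigma n.+1 w)%:E.
  rewrite /zeta -nneseries_addn => [|i]; last by rewrite lee_fin.
  by apply: eq_eseriesr => n _; rewrite addn1.
rewrite (eq_integral (fun w => \sum_(n <oo) (sigma n.+1 w)%:E)); last first.
  by move=> w _; exact: zetaE.
rewrite integral_nneseries//; last 2 first.
- by move=> n; exact/measurable_EFinP.
- by move=> n w _; rewrite lee_fin.
apply: (@le_trans _ _ (\sum_(n <oo) (((1 - expR (-1))^-1)%:E *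
    csum (fun y => jump_law n y * ((gammaR Gam y)^-1)%:E)))).
  apply: lee_nneseries => [n _ _|n _]; last exact: integral_sigma_le.
  by apply: integral_ge0 => w _; rewrite lee_fin.
rewrite nneseriesZl => [|n _]; last exact/csum_ge0/jump_law_recip_ge0.
rewrite EFinM lee_wpmul2l ?lee_fin//.
apply: lime_le.
  by apply: is_cvg_nneseries => n _ _; exact/csum_ge0/jump_law_recip_ge0.
apply: nearW => N /=; apply: le_trans (sum_jump_law_recip_le N).
by rewrite leeDl// csum_ge0// => y; rewrite mule_ge0 ?jump_law_ge0 ?lee_fin.
Qed.

End Potential.

End EmbeddedChain.

Theorem proposition1p1 (R : realType) (X : countType) (Gam : X -> X -> R)
  (X_infinite : ~ finite_set [set: X])
  (HQ : Qmatrix Gam) (Hirr : jump_irreducible Gam)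
  (f : X -> R) (Hf : in_Dom_plus Gam f) (Hfpos : forall x, 0 < f x)
  (Hfbdd : exists M : R, forall x, f x <= M)
  (g : R -> R)
  (Hgpos : forall y : R, 0 < y -> 0 < g y)
  (Hgincr : {in `]0, +oo[ &, {homo g : y z / y <= z}})
  (Hgint : (\int[lebesgue_measure]_(y in `]0%R, sup (range f)[%classic) ((g y)^-1)%:E
              < +oo)%E)
  (Hdrift : forall x, Gen Gam f x <= - g (f x)) :
  forall (x : X) (d : measure_display) (T : measurableType d)
    (P : probability T R) (xi : nat -> T -> X) (sigma : nat -> T -> R),
    is_CTMC Gam P x xi sigma ->
    (\int[P]_w zeta sigma w < +oo)%E.
Proof.
move=> x d T P xi sigma HC.
have f_le_sup z : f z <= sup (range f).
  apply: ub_le_sup; last by exists z.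
  by case: Hfbdd => M f_le_M; exists M => _ [y _ <-].
pose V y := fine (int_recip g (f y)).
have V_ge0 y : 0 <= V y by rewrite fine_ge0// int_recip_ge0.
apply: le_lt_trans (integral_zeta_le HQ HC V_ge0 _) (ltry _) => y.
apply: (Pjump_drift HQ f V (g (f y)) y Hf V_ge0 (Hgpos _ (Hfpos y))) => // z.
exact: (int_recip_sub_le g Hgpos Hgincr _ Hgint (Hfpos y) (Hfpos z)
  (f_le_sup y) (f_le_sup z)).
Qed.
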